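(* Consider formal expressions built from one variable $x$ and real constants using only the binary operators $+,-,\times,\div$ (with parentheses allowed freely), and let the operator count of an expression be the number of occurrences of these operators in it. Each expression defines a function $f(x)$ wherever it is defined. Say that $f$ is admissible if: (1) $f$ is defined on all of $\mathbb{R}^+=(0,\infty)$ and takes values in $[0,1]$; (2) $f(1)=\tfrac12$; (3) $\lim_{x\to 0} f(x)=0$; (4) $\lim_{x\to\infty} f(x)=1$. Then no expression with operator count $0$ or $1$ defines an admissible function, and every expression with operator count exactly $2$ that defines an admissible function defines $f(x)=\dfrac{x}{1+x}$ (which is admissible). Consequently, with $x=\pi_i/\pi_j$ for positive strengths $\pi_i,\pi_j$, the unique admissible function of minimal operator count gives $f(\pi_i/\pi_j)=\dfrac{\pi_i}{\pi_i+\pi_j}$.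
   Context: Here $x=x_{ij}=\pi_i/\pi_j$ is the ratio of positive strength parameters of items $i$ and $j$, and $f(x_{ij})$ is intended as the probability that $i$ is preferred to $j$ in a pairwise comparison. Constants may appear in place of the variable at no cost in the operator count; parentheses do not count as operators. *)

From Stdlib Require Import Reals.
Open Scope R_scope.

(* Formal expressions in one variable x and real constants, built with the
   binary operators + - * / (parentheses are implicit in the tree structure). *)
Inductive expr : Type :=
| EVar : expr
| EConst : R -> expr
| EAdd : expr -> expr -> expr
| ESub : expr -> expr -> expr
| EMul : expr -> expr -> expr
| EDiv : expr -> expr -> expr.

Fixpoint opcount (e : expr) : nat :=
  match e with
  | EVar | EConst _ => 0
  | EAdd a b | ESub a b | EMul a b | EDiv a b => S (opcount a + opcount b)
  end.

Fixpoint eval (e : expr) (x : R) : option R :=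
  match e with
  | EVar => Some x
  | EConst c => Some c
  | EAdd a b => match eval a x, eval b x with Some u, Some v => Some (u + v) | _, _ => None end
  | ESub a b => match eval a x, eval b x with Some u, Some v => Some (u - v) | _, _ => None end
  | EMul a b => match eval a x, eval b x with Some u, Some v => Some (u * v) | _, _ => None end
  | EDiv a b => match eval a x, eval b x with
                | Some u, Some v => if Req_EM_T v 0 then None else Some (u / v)
                | _, _ => None end
  end.

Definition admissible (e : expr) : Prop :=
  (forall x, 0 < x -> exists v, eval e x = Some v /\ 0 <= v <= 1) /\
  eval e 1 = Some (1/2) /\
  (forall eps, 0 < eps -> exists delta, 0 < delta /\
     forall x v, 0 < x < delta -> eval e x = Some v -> Rabs v < eps) /\
  (forall eps, 0 < eps -> exists M, forall x v, M < x -> eval e x = Some v ->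
     Rabs (v - 1) < eps).

From Stdlib Require Import Reals Lra Lia.
Open Scope R_scope.

(* On (0,oo), an expression with at most one operator defines an affine
   function, x^2 or c/x; one with two operators defines a Laurent polynomial
   a x^2 + b x + c + d/x, x^3, c/x^2, x/(ax+b) or d/(ax+b).  Boundedness of an
   admissible f makes finite differences of a Laurent polynomial bounded, which
   kills its non-constant coefficients, and a constant cannot tend to both 0 and
   1.  The cube and c/x^2 violate f(1) = 1/2 or f <= 1, d/(ax+b) tends to 0 at
   infinity unless it is constant, and x/(ax+b) tends to 1 with value 1/2 at 1
   only when a = b = 1. *)

(* Total semantics: division by zero yields Rocq's junk value [r / 0 = 0]. *)
Fixpoint sem (e : expr) (x : R) : R :=
  match e with
  | EVar => x
  | EConst c => c
  | EAdd a b => sem a x + sem b x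
  | ESub a b => sem a x - sem b x
  | EMul a b => sem a x * sem b x
  | EDiv a b => sem a x / sem b x
  end.

Lemma eval_sem e x v : eval e x = Some v -> sem e x = v.
Proof.
  revert v; induction e as [| c | e1 IH1 e2 IH2 | e1 IH1 e2 IH2 | e1 IH1 e2 IH2
                           | e1 IH1 e2 IH2]; intros v Hv; simpl in *;
    try (injection Hv; trivial; fail);
    destruct (eval e1 x) as [u1|]; destruct (eval e2 x) as [u2|]; try discriminate;
    rewrite (IH1 u1), (IH2 u2) by reflexivity.
  4: destruct (Req_EM_T u2 0); [discriminate|].
  all: injection Hv; trivial.
Qed.

Lemma opcount_eq0 e : opcount e = 0%nat -> e = EVar \/ exists c, e = EConst c.
Proof. destruct e; simpl; try discriminate; eauto. Qed.

Record admissible_fun (f : R -> R) : Prop := {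
  adm_range : forall x, 0 < x -> 0 <= f x <= 1;
  adm_one : f 1 = 1 / 2;
  adm_lim0 : forall eps, 0 < eps ->
    exists delta, 0 < delta /\ forall x, 0 < x < delta -> Rabs (f x) < eps;
  adm_lim_pinfty : forall eps, 0 < eps ->
    exists M, forall x, M < x -> 0 < x -> Rabs (f x - 1) < eps }.

Lemma admissible_sem e : admissible e -> admissible_fun (sem e).
Proof.
  intros (Hrange & Hone & Hlim0 & Hliminf).
  assert (Hsem : forall x, 0 < x -> eval e x = Some (sem e x) /\ 0 <= sem e x <= 1).
  { intros x Hx. destruct (Hrange x Hx) as (v & Hv & Hv01).
    rewrite (eval_sem e x v Hv). auto. }
  split.
  - intros x Hx. apply Hsem, Hx.
  - exact (eval_sem e 1 _ Hone).
  - intros eps Heps. destruct (Hlim0 eps Heps) as (delta & Hdelta & Hd).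
    exists delta. split; [exact Hdelta|].
    intros x Hx. apply (Hd x); [exact Hx | apply Hsem; lra].
  - intros eps Heps. destruct (Hliminf eps Heps) as [M HM].
    exists M. intros x HMx Hx. apply (HM x); [exact HMx | apply Hsem, Hx].
Qed.

Lemma eq0_of_bounded_mul b M K : (forall x, M < x -> Rabs (b * x) <= K) -> b = 0.
Proof.
  intros Hb. destruct (Req_dec b 0) as [Hb0|Hb0]; [exact Hb0|exfalso].
  pose proof (Rabs_pos_lt b Hb0) as Hpos.
  pose proof (Rabs_pos K); pose proof (Rle_abs K).
  pose proof (Rmax_l M 0); pose proof (Rmax_r M 0).
  set (x := Rmax M 0 + (Rabs K + 1) / Rabs b).
  assert (Hq : 0 < (Rabs K + 1) / Rabs b) by (apply Rdiv_lt_0_compat; lra).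
  assert (Hbx : Rabs b * x = Rabs b * Rmax M 0 + (Rabs K + 1)) by (unfold x; field; lra).
  specialize (Hb x ltac:(unfold x; lra)).
  rewrite Rabs_mult, (Rabs_right x) in Hb by (unfold x; lra).
  nra.
Qed.

Lemma eq0_of_le_mul_eps r C : (forall eps, 0 < eps -> Rabs r <= C * eps) -> r = 0.
Proof.
  intros Hr. destruct (Req_dec r 0) as [Hr0|Hr0]; [exact Hr0|exfalso].
  pose proof (Rabs_pos_lt r Hr0).
  pose proof (Hr 1 Rlt_0_1).
  specialize (Hr (Rabs r / (2 * C)) ltac:(apply Rdiv_lt_0_compat; lra)).
  replace (C * (Rabs r / (2 * C))) with (Rabs r / 2) in Hr by (field; lra).
  lra.
Qed.

Definition laurent (f : R -> R) : Prop :=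
  exists a b c d, forall x, 0 < x -> f x = a * (x * x) + b * x + c + d / x.

Section Admissible.

Variable f : R -> R.
Hypothesis f_adm : admissible_fun f.

Lemma adm_not_const c : ~ (forall x, 0 < x -> f x = c).
Proof.
  intros Hf. pose proof (adm_one f f_adm) as H1. rewrite Hf in H1 by lra.
  destruct (adm_lim0 f f_adm (1 / 2)) as (delta & Hdelta & Hlim); [lra|].
  specialize (Hlim (delta / 2) ltac:(lra)).
  rewrite Hf, H1, Rabs_right in Hlim by lra. lra.
Qed.

Lemma adm_not_laurent : ~ laurent f.
Proof.
  intros (a & b & c & d & Hf).
  pose proof (adm_range f f_adm) as Hr.
  (* Weights (-1, 6, -9, 4) at x, 2x, 3x, 4x annihilate 1, x and 1/x; the third
     difference (-1, 3, -3, 1) annihilates 1, x and x^2. *)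
  assert (Ha : a = 0).
  { apply (eq0_of_bounded_mul a 1 (10 / 6)). intros x Hx.
    assert (E : 6 * a * (x * x) = - f x + 6 * f (2 * x) - 9 * f (3 * x) + 4 * f (4 * x))
      by (rewrite !Hf by lra; field; lra).
    pose proof (Hr x); pose proof (Hr (2 * x)); pose proof (Hr (3 * x)); pose proof (Hr (4 * x)).
    assert (Hx2 : Rabs (a * x * x) <= 10 / 6) by (apply Rabs_le; nra).
    assert (Rabs (a * x * x) = Rabs (a * x) * x)
      by (rewrite Rabs_mult, (Rabs_right x) by lra; reflexivity).
    pose proof (Rabs_pos (a * x)). nra. }
  assert (Hd : d = 0).
  { apply (eq0_of_bounded_mul d 1 16). intros y Hy.
    assert (Hx : 0 < / y) by (apply Rinv_0_lt_compat; lra).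
    set (x := / y) in Hx.
    assert (E : d / x = 4 * (f x - 3 * f (2 * x) + 3 * f (3 * x) - f (4 * x)))
      by (rewrite !Hf by lra; field; lra).
    pose proof (Hr x); pose proof (Hr (2 * x)); pose proof (Hr (3 * x)); pose proof (Hr (4 * x)).
    replace (d * y) with (d / x) by (unfold x, Rdiv; rewrite Rinv_inv; reflexivity).
    apply Rabs_le. lra. }
  subst a d.
  assert (Hb : b = 0).
  { apply (eq0_of_bounded_mul b 1 1). intros x Hx.
    assert (E : b * x = f (2 * x) - f x) by (rewrite !Hf by lra; field; lra).
    pose proof (Hr x); pose proof (Hr (2 * x)).
    apply Rabs_le. lra. }
  subst b. apply (adm_not_const c). intros x Hx. rewrite Hf by exact Hx. field. lra.
Qed.

Lemma adm_not_cube : ~ (forall x, 0 < x -> f x = x * (x * x)).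
Proof. intros Hf. pose proof (adm_one f f_adm) as H1. rewrite Hf in H1 by lra. lra. Qed.

Lemma adm_not_inv_square c : ~ (forall x, 0 < x -> f x = c / (x * x)).
Proof.
  intros Hf. pose proof (adm_one f f_adm) as H1. pose proof (adm_range f f_adm (1 / 2)) as H2.
  rewrite Hf in H1, H2 by lra.
  replace (c / (1 * 1)) with c in H1 by field.
  replace (c / (1 / 2 * (1 / 2))) with (4 * c) in H2 by field.
  lra.
Qed.

Lemma adm_not_recip_affine d a b : ~ (forall x, 0 < x -> f x = d / (a * x + b)).
Proof.
  intros Hf.
  destruct (adm_lim_pinfty f f_adm (1 / 2)) as [M HM]; [lra|].
  assert (Ha : a = 0).
  { apply (eq0_of_bounded_mul a (Rmax M 0) (2 * Rabs d + Rabs b)). intros x Hx.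
    pose proof (Rmax_l M 0); pose proof (Rmax_r M 0).
    specialize (HM x ltac:(lra) ltac:(lra)). rewrite Hf in HM by lra.
    apply Rabs_def2 in HM.
    assert (Hnz : a * x + b <> 0) by (intros Hz; rewrite Hz, Rdiv_0_r in HM; lra).
    (* Where f is close to 1, |a x + b| = |d| / f x stays bounded. *)
    set (v := d / (a * x + b)) in HM.
    assert (Hd : Rabs (a * x + b) * v = Rabs d).
    { replace d with ((a * x + b) * v) at 1 by (unfold v; field; exact Hnz).
      rewrite Rabs_mult, (Rabs_right v) by lra. reflexivity. }
    pose proof (Rabs_pos (a * x + b)).
    assert (Rabs (a * x + b) <= 2 * Rabs d) by nra.
    pose proof (Rabs_triang (a * x + b) (- b)) as Htri.
    rewrite Rabs_Ropp in Htri.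
    replace (a * x + b + - b) with (a * x) in Htri by ring.
    lra. }
  subst a. apply (adm_not_const (d / b)). intros x Hx. rewrite Hf by exact Hx.
  f_equal. ring.
Qed.

Lemma adm_mobius a b : (forall x, 0 < x -> f x = x / (a * x + b)) -> a = 1 /\ b = 1.
Proof.
  intros Hf.
  assert (Hab : a + b = 2).
  { pose proof (adm_one f f_adm) as H1. rewrite Hf in H1 by lra.
    destruct (Req_dec (a * 1 + b) 0) as [Hz|Hz]; [rewrite Hz, Rdiv_0_r in H1; lra|].
    assert (E : (a * 1 + b) * (1 / (a * 1 + b)) = 1) by (field; lra).
    rewrite H1 in E. lra. }
  enough (Ha : a - 1 = 0) by lra.
  apply (eq0_of_le_mul_eps (a - 1) (Rabs a + 2)). intros eps Heps.
  pose proof (Rmin_l eps (1 / 2)); pose proof (Rmin_r eps (1 / 2)).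
  set (e := Rmin eps (1 / 2)) in *.
  assert (He : 0 < e) by (apply Rmin_pos; lra).
  destruct (adm_lim_pinfty f f_adm e He) as [M HM].
  pose proof (Rmax_l M 0); pose proof (Rmax_r M 0); pose proof (Rabs_pos b).
  assert (Hq : e * (Rabs b / e) = Rabs b) by (field; lra).
  assert (Hq0 : 0 <= Rabs b / e) by nra.
  set (x := Rmax M 0 + Rabs b / e + 1).
  assert (Hx : 0 < x) by (unfold x; lra).
  assert (Hbx : Rabs b <= e * x) by (unfold x; nra).
  specialize (HM x ltac:(unfold x; lra) Hx). rewrite Hf in HM by exact Hx.
  set (v := x / (a * x + b)) in HM.
  apply Rabs_def2 in HM.
  assert (Hnz : a * x + b <> 0)
    by (intros Hz; unfold v in HM; rewrite Hz, Rdiv_0_r in HM; lra).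
  (* With v = f x within e of 1 and |b| <= e x, this bounds |a - 1| by (|a| + 2) e. *)
  assert (E : (a - 1) * x = a * x * (1 - v) - b * v) by (unfold v; field; exact Hnz).
  assert (Hbound : Rabs ((a - 1) * x) <= Rabs a * x * e + Rabs b * 2).
  { rewrite E. unfold Rminus at 1.
    eapply Rle_trans; [apply Rabs_triang|].
    rewrite Rabs_Ropp, !Rabs_mult, (Rabs_right x), (Rabs_right v) by lra.
    apply Rplus_le_compat.
    - apply Rmult_le_compat_l; [pose proof (Rabs_pos a); nra|].
      apply Rabs_le. lra.
    - apply Rmult_le_compat_l; lra. }
  rewrite Rabs_mult, (Rabs_right x) in Hbound by lra.
  pose proof (Rabs_pos a).
  apply Rle_trans with ((Rabs a + 2) * e); [|apply Rmult_le_compat_l; lra].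
  apply Rmult_le_reg_r with x; [exact Hx | lra].
Qed.

End Admissible.

Inductive shape1 (f : R -> R) : Prop :=
  | shape1_affine a b : (forall x, 0 < x -> f x = a * x + b) -> shape1 f
  | shape1_square : (forall x, 0 < x -> f x = x * x) -> shape1 f
  | shape1_hyperbola c : (forall x, 0 < x -> f x = c / x) -> shape1 f.

Inductive shape2 (f : R -> R) : Prop :=
  | shape2_laurent : laurent f -> shape2 f
  | shape2_cube : (forall x, 0 < x -> f x = x * (x * x)) -> shape2 f
  | shape2_inv_square c : (forall x, 0 < x -> f x = c / (x * x)) -> shape2 f
  | shape2_mobius a b : (forall x, 0 < x -> f x = x / (a * x + b)) -> shape2 f
  | shape2_recip_affine d a b : (forall x, 0 < x -> f x = d / (a * x + b)) -> shape2 f.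

Lemma laurent_ext f g : (forall x, 0 < x -> f x = g x) -> laurent g -> laurent f.
Proof.
  intros Hfg (a & b & c & d & Hg). exists a, b, c, d.
  intros x Hx. rewrite Hfg, Hg by exact Hx. reflexivity.
Qed.

Lemma laurent_add f g : laurent f -> laurent g -> laurent (fun x => f x + g x).
Proof.
  intros (a & b & c & d & Hf) (a' & b' & c' & d' & Hg).
  exists (a + a'), (b + b'), (c + c'), (d + d').
  intros x Hx. rewrite Hf, Hg by exact Hx. field. lra.
Qed.

Lemma laurent_sub f g : laurent f -> laurent g -> laurent (fun x => f x - g x).
Proof.
  intros (a & b & c & d & Hf) (a' & b' & c' & d' & Hg).
  exists (a - a'), (b - b'), (c - c'), (d - d').
  intros x Hx. rewrite Hf, Hg by exact Hx. field. lra.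
Qed.

Lemma laurent_scale k f : laurent f -> laurent (fun x => k * f x).
Proof.
  intros (a & b & c & d & Hf). exists (k * a), (k * b), (k * c), (k * d).
  intros x Hx. rewrite Hf by exact Hx. field. lra.
Qed.

Lemma laurent_of_shape1 f : shape1 f -> laurent f.
Proof.
  intros [a b Hf | Hf | c Hf].
  - exists 0, a, b, 0. intros x Hx. rewrite Hf by exact Hx. field. lra.
  - exists 1, 0, 0, 0. intros x Hx. rewrite Hf by exact Hx. field. lra.
  - exists 0, 0, 0, c. intros x Hx. rewrite Hf by exact Hx. field. lra.
Qed.

Lemma shape2_ext f g : (forall x, 0 < x -> f x = g x) -> shape2 g -> shape2 f.
Proof.
  intros Hfg [Hg | Hg | c Hg | a b Hg | d a b Hg];
    [ exact (shape2_laurent f (laurent_ext f g Hfg Hg)) | apply shape2_cube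
    | apply (shape2_inv_square _ c) | apply (shape2_mobius _ a b)
    | apply (shape2_recip_affine _ d a b) ];
    intros x Hx; rewrite Hfg by exact Hx; apply Hg, Hx.
Qed.

Lemma shape1_sem e : (opcount e <= 1)%nat -> shape1 (sem e).
Proof.
  intros He. destruct e as [| c | A B | A B | A B | A B]; simpl in He;
    [ apply (shape1_affine _ 1 0); intros x _; cbn [sem]; ring
    | apply (shape1_affine _ 0 c); intros x _; cbn [sem]; ring
    | destruct A as [| c | ? ? | ? ? | ? ? | ? ?]; simpl in He; try lia;
      destruct B as [| d | ? ? | ? ? | ? ? | ? ?]; simpl in He; try lia .. ].
  - apply (shape1_affine _ 2 0). intros x _. cbn [sem]. ring.
  - apply (shape1_affine _ 1 d). intros x _. cbn [sem]. ring.
  - apply (shape1_affine _ 1 c). intros x _. cbn [sem]. ring.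
  - apply (shape1_affine _ 0 (c + d)). intros x _. cbn [sem]. ring.
  - apply (shape1_affine _ 0 0). intros x _. cbn [sem]. ring.
  - apply (shape1_affine _ 1 (- d)). intros x _. cbn [sem]. ring.
  - apply (shape1_affine _ (-1) c). intros x _. cbn [sem]. ring.
  - apply (shape1_affine _ 0 (c - d)). intros x _. cbn [sem]. ring.
  - apply shape1_square. intros x _. reflexivity.
  - apply (shape1_affine _ d 0). intros x _. cbn [sem]. ring.
  - apply (shape1_affine _ c 0). intros x _. cbn [sem]. ring.
  - apply (shape1_affine _ 0 (c * d)). intros x _. cbn [sem]. ring.
  - apply (shape1_affine _ 0 1). intros x Hx. cbn [sem]. field. lra.
  - apply (shape1_affine _ (/ d) 0). intros x _. cbn [sem]. unfold Rdiv. ring.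
  - apply (shape1_hyperbola _ c). intros x _. reflexivity.
  - apply (shape1_affine _ 0 (c / d)). intros x _. cbn [sem]. ring.
Qed.

Lemma shape2_var_mul f : shape1 f -> shape2 (fun x => x * f x).
Proof.
  intros [a b Hf | Hf | c Hf];
    [apply shape2_laurent | apply shape2_cube | apply shape2_laurent].
  - exists a, b, 0, 0. intros x Hx. rewrite Hf by exact Hx. field. lra.
  - intros x Hx. rewrite Hf by exact Hx. reflexivity.
  - exists 0, 0, c, 0. intros x Hx. rewrite Hf by exact Hx. field. lra.
Qed.

Lemma shape2_div_var f : shape1 f -> shape2 (fun x => f x / x).
Proof.
  intros [a b Hf | Hf | c Hf];
    [apply shape2_laurent | apply shape2_laurent | apply (shape2_inv_square _ c)].
  - exists 0, 0, a, b. intros x Hx. rewrite Hf by exact Hx. field. lra.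
  - exists 0, 1, 0, 0. intros x Hx. rewrite Hf by exact Hx. field. lra.
  - intros x Hx. rewrite Hf by exact Hx. field. lra.
Qed.

(* Since [/ 0 = 0], [Rinv_mult] and [Rinv_inv] hold unconditionally, so dividing
   by [c / x] needs no [c <> 0]. *)
Lemma shape2_var_div f : shape1 f -> shape2 (fun x => x / f x).
Proof.
  intros [a b Hf | Hf | c Hf];
    [apply (shape2_mobius _ a b) | apply shape2_laurent | apply shape2_laurent].
  - intros x Hx. rewrite Hf by exact Hx. reflexivity.
  - exists 0, 0, 0, 1. intros x Hx. rewrite Hf by exact Hx. field. lra.
  - exists (/ c), 0, 0, 0. intros x Hx. rewrite Hf by exact Hx.
    unfold Rdiv. rewrite Rinv_mult, Rinv_inv. ring.
Qed.

Lemma shape2_const_div d f : shape1 f -> shape2 (fun x => d / f x).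
Proof.
  intros [a b Hf | Hf | c Hf];
    [apply (shape2_recip_affine _ d a b) | apply (shape2_inv_square _ d) | apply shape2_laurent].
  1, 2: intros x Hx; rewrite Hf by exact Hx; reflexivity.
  exists 0, (d / c), 0, 0. intros x Hx. rewrite Hf by exact Hx.
  unfold Rdiv. rewrite Rinv_mult, Rinv_inv. ring.
Qed.

Lemma shape2_sem e : opcount e = 2%nat -> shape2 (sem e).
Proof.
  intros He.
  assert (Hl : forall t, (opcount t <= 1)%nat -> laurent (sem t))
    by (intros t Ht; apply laurent_of_shape1, shape1_sem, Ht).
  destruct e as [| c | A B | A B | A B | A B]; simpl in He; try discriminate.
  - apply shape2_laurent, laurent_add; apply Hl; lia.
  - apply shape2_laurent, laurent_sub; apply Hl; lia.
  - destruct (Nat.eq_dec (opcount A) 0) as [HA|HA].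
    + destruct (opcount_eq0 A HA) as [-> | [c ->]]; cbn [sem].
      * apply shape2_var_mul, shape1_sem. lia.
      * apply shape2_laurent, laurent_scale, Hl. lia.
    + destruct (opcount_eq0 B ltac:(lia)) as [-> | [d ->]]; cbn [sem].
      * apply (shape2_ext _ (fun x => x * sem A x)).
        { intros x _. cbn [sem]. ring. }
        apply shape2_var_mul, shape1_sem. lia.
      * apply shape2_laurent, (laurent_ext _ (fun x => d * sem A x)).
        { intros x _. cbn [sem]. ring. }
        apply laurent_scale, Hl. lia.
  - destruct (Nat.eq_dec (opcount A) 0) as [HA|HA].
    + destruct (opcount_eq0 A HA) as [-> | [c ->]]; cbn [sem].
      * apply shape2_var_div, shape1_sem. lia.
      * apply shape2_const_div, shape1_sem. lia.
    + destruct (opcount_eq0 B ltac:(lia)) as [-> | [d ->]]; cbn [sem].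
      * apply shape2_div_var, shape1_sem. lia.
      * apply shape2_laurent, (laurent_ext _ (fun x => / d * sem A x)).
        { intros x _. cbn [sem]. unfold Rdiv. ring. }
        apply laurent_scale, Hl. lia.
Qed.

Lemma not_admissible_opcount_le1 e : (opcount e <= 1)%nat -> ~ admissible e.
Proof.
  intros He Hadm.
  apply (adm_not_laurent (sem e) (admissible_sem e Hadm)).
  apply laurent_of_shape1, shape1_sem, He.
Qed.

Lemma admissible_opcount2 e : opcount e = 2%nat -> admissible e ->
  forall x, 0 < x -> eval e x = Some (x / (1 + x)).
Proof.
  intros He Hadm x Hx.
  pose proof (admissible_sem e Hadm) as Hf.
  destruct (proj1 Hadm x Hx) as (v & Hv & _).
  rewrite Hv, <- (eval_sem e x v Hv). f_equal.
  destruct (shape2_sem e He) as [Hl | Hs | c Hs | a b Hs | d a b Hs].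
  - exfalso. exact (adm_not_laurent _ Hf Hl).
  - exfalso. exact (adm_not_cube _ Hf Hs).
  - exfalso. exact (adm_not_inv_square _ Hf c Hs).
  - destruct (adm_mobius _ Hf a b Hs) as [-> ->].
    rewrite Hs by exact Hx. f_equal. ring.
  - exfalso. exact (adm_not_recip_affine _ Hf d a b Hs).
Qed.

Definition bradley_terry_expr : expr := EDiv EVar (EAdd (EConst 1) EVar).

Lemma eval_bradley_terry x : 0 < x -> eval bradley_terry_expr x = Some (x / (1 + x)).
Proof. intros Hx. simpl. destruct (Req_EM_T (1 + x) 0); [lra | reflexivity]. Qed.

Lemma bradley_terry_admissible : admissible bradley_terry_expr.
Proof.
  assert (Hv : forall x, 0 < x -> x / (1 + x) * (1 + x) = x) by (intros x Hx; field; lra).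
  split; [|split; [|split]].
  - intros x Hx. exists (x / (1 + x)). split; [exact (eval_bradley_terry x Hx)|].
    specialize (Hv x Hx). nra.
  - rewrite eval_bradley_terry by lra. f_equal; field.
  - intros eps Heps. exists eps. split; [exact Heps|].
    intros x v Hx Hev. rewrite eval_bradley_terry in Hev by lra. injection Hev as <-.
    specialize (Hv x ltac:(lra)).
    rewrite Rabs_right by nra. nra.
  - intros eps Heps. exists (/ eps). intros x v Hx Hev.
    assert (Hinv : 0 < / eps) by (apply Rinv_0_lt_compat, Heps).
    rewrite eval_bradley_terry in Hev by lra. injection Hev as <-.
    specialize (Hv x ltac:(lra)).
    assert (Hex : 1 < eps * x).
    { replace 1 with (eps * / eps) by (field; lra). apply Rmult_lt_compat_l; assumption. }
    rewrite Rabs_left by nra. nra.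
Qed.

Theorem mainTheorem2 :
  (forall e : expr, (opcount e <= 1)%nat -> ~ admissible e) /\
  (forall e : expr, opcount e = 2%nat -> admissible e ->
     forall x, 0 < x -> eval e x = Some (x / (1 + x))) /\
  (exists e : expr, opcount e = 2%nat /\ admissible e /\
     forall x, 0 < x -> eval e x = Some (x / (1 + x))) /\
  (forall e : expr, opcount e = 2%nat -> admissible e ->
     forall pi pj, 0 < pi -> 0 < pj -> eval e (pi / pj) = Some (pi / (pi + pj))).
Proof.
  split; [exact not_admissible_opcount_le1|].
  split; [exact admissible_opcount2|].
  split.
  - exists bradley_terry_expr.
    split; [reflexivity|]. split; [exact bradley_terry_admissible | exact eval_bradley_terry].
  - intros e He Hadm pi pj Hi Hj.
    rewrite (admissible_opcount2 e He Hadm) by (apply Rdiv_lt_0_compat; assumption).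
    f_equal. field. lra.
Qed.
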